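(* Let $t\ge1$ and $n=2(t+1)^2$. Let $\mathcal{C}_0\subseteq\mathbb{Z}_n^2$ be a linear $t$-error-correcting diameter perfect code with generator matrix $G_0$ and $\mathcal{C}=\mathbf{x}+\mathcal{C}_0$ for some $\mathbf{x}=(x_1,x_2)\in\mathbb{Z}_n^2$, of Case I or Case II. Let $\mathcal{S}$ be the set of diameter perfect Sudoku grids with respect to $\mathcal{C}$ and $\bar{\mathcal{S}}$ its set of relabeling classes. (i) If $\mathcal{C}$ is of Case I and $\mathcal{G}_\mathcal{S}=\langle \tau_1^{t+1}\tau_2^{t+1},\ \tau_2^{2(t+1)},\ \tau_2^{2x_2+1}s,\ \tau_1^{2x_1+2}\tau_2^{2x_2+1}r^2\rangle$, then each equivalence class (orbit) in $\bar{\mathcal{S}}$ under the action of $\mathcal{G}_\mathcal{S}$ has size dividing $4n$. (ii) If $\mathcal{C}$ is of Case II, $G_0=[a~~b]$, and $\mathcal{G}_\mathcal{S}=\langle \tau_1^{a}\tau_2^{b},\ \tau_1^{2x_1+2}\tau_2^{2x_2+1}r^2\rangle$, then each equivalence class in $\bar{\mathcal{S}}$ under the action of $\mathcal{G}_\mathcal{S}$ has size dividing $2n$.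
   Context: $\mathbb{Z}_n$ is the integers modulo $n$; Lee weight $\mathrm{wt}_L(\mathbf{u})=\sum_i\min\{u_i,n-u_i\}$, Lee distance $d_L(\mathbf{u},\mathbf{v})=\mathrm{wt}_L(\mathbf{u}-\mathbf{v})$. Linear code = submodule of $\mathbb{Z}_n^2$, generator matrix = matrix whose rows form a minimal spanning set; codes are equivalent if one is the image of the other under a coordinate permutation matrix. $\mathcal{A}_{2t+1}$: set of points within Lee distance $t$ of an adjacent pair (its core); it has $n$ points. A $t$-error-correcting diameter perfect code is a $(2t+1)$-diameter perfect code of size $n$ in $\mathbb{Z}_n^2$ with minimum distance $2t+2$ and anticode $\mathcal{A}_{2t+1}$. Case I: $\mathcal{C}_0$ equivalent to the code generated by $\begin{bmatrix}t+1&t+1\\0&2(t+1)\end{bmatrix}$; Case II: $\mathcal{C}_0$ equivalent to the code generated by $[1~~2t+1]$. For each codeword $\mathbf{c}_i$ of $\mathcal{C}=\{\mathbf{c}_1,\dots,\mathbf{c}_n\}$ take the translate $\mathcal{A}_i$ of $\mathcal{A}_{2t+1}$ with core $\{\mathbf{c}_i,\mathbf{c}_i+(1,0)\}$; the palette grid $\mathcal{I}_{\mathcal{C},\mathcal{A}}$ has entry $i$ at every position $(x,y)\in\mathcal{A}_i$ (row $x$, column $y$). A diameter perfect Sudoku grid is a Latin square of order $n$ on $[n]$ whose pairs of corresponding entries with $\mathcal{I}_{\mathcal{C},\mathcal{A}}$ are all distinct (orthogonality). Relabeling: $S_1\sim S_2$ iff $S_2$ is obtained from $S_1$ by applying a bijection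 $\sigma:[n]\to[n]$ to every entry. Maps on arrays (indices mod $n$): $(r(A))_{i,j}=A_{n-1-j,i}$, $(s(A))_{i,j}=A_{i,n-1-j}$, $(\tau_1(A))_{i,j}=A_{i-1,j}$, $(\tau_2(A))_{i,j}=A_{i,j-1}$. Elements of $\mathcal{G}_\mathcal{S}$ map $\mathcal{S}$ to $\mathcal{S}$ and commute with relabeling, hence act on $\bar{\mathcal{S}}$. *)

From mathcomp Require Import all_boot all_order all_algebra all_fingroup.
Set Implicit Arguments. Unset Strict Implicit. Unset Printing Implicit Defensive.
Import GRing.Theory.

Section Defs.
Variable n : nat.

(* positions (row x, column y) in Z_n^2 *)
Definition pos := ('Z_n * 'Z_n)%type.

(* Lee weight / distance on Z_n and Z_n^2 (values of 'Z_n are their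
   representatives in [0, n-1], for n >= 2) *)
Definition leeZ (u : 'Z_n) : nat := minn (val u) (n - val u).
Definition wtL (u : pos) : nat := leeZ u.1 + leeZ u.2.
Definition dL (u v : pos) : nat := wtL (u - v)%R.

Definition is_linear (C : {set pos}) : Prop :=
  (0%R \in C) /\ {in C &, forall u v, (u - v)%R \in C}.

Definition min_dist_eq (C : {set pos}) (d : nat) : Prop :=
  (forall c c', c \in C -> c' \in C -> c != c' -> d <= dL c c') /\
  (exists c c', [/\ c \in C, c' \in C, c != c' & dL c c' = d]).

Definition anticode (t : nat) (c : pos) : {set pos} :=
  [set p : pos | (dL p c <= t) || (dL p (c + (1, 0))%R <= t)].

(* linear t-error-correcting diameter perfect code: a (2t+1)-diameter perfect
   code of size n (|C||A_{2t+1}| = n * n = |Z_n^2|) with minimum distance 2t+2 *)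
Definition linear_tEC_DPC (t : nat) (C : {set pos}) : Prop :=
  [/\ is_linear C, #|C| = n, #|anticode t 0%R| = n & min_dist_eq C (2 * t + 2)].

Definition gen1 (g : pos) : {set pos} := [set (g *+ k)%R | k : 'I_n].
Definition gen2 (g h : pos) : {set pos} :=
  [set (g *+ (fst kl) + h *+ (snd kl))%R | kl : 'I_n * 'I_n].

Definition swapc (p : pos) : pos := (p.2, p.1).
(* equivalence under coordinate permutation matrices (identity or swap) *)
Definition code_equiv (C D : {set pos}) : Prop :=
  C = D \/ C = [set swapc p | p in D].

Definition caseI (t : nat) (C0 : {set pos}) : Prop :=
  code_equiv C0 (gen2 ((t.+1)%:R, (t.+1)%:R)%R (0, (2 * t.+1)%:R)%R).
Definition caseII (t : nat) (C0 : {set pos}) : Prop :=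
  code_equiv C0 (gen1 (1, (2 * t + 1)%:R)%R).

Definition translate (x : pos) (C0 : {set pos}) : {set pos} :=
  [set (x + c)%R | c in C0].

(* arrays of order n with entries in [n] (modelled as 'I_n) *)
Definition arr := {ffun pos -> 'I_n}.

(* palette grid: entry i at every position of A_i (core {c_i, c_i+(1,0)}) *)
Definition palette (t : nat) (cw : 'I_n -> pos) (p : pos) : option 'I_n :=
  [pick i | p \in anticode t (cw i)].

Definition latin (A : arr) : Prop :=
  forall p q : pos, p != q -> (p.1 == q.1) || (p.2 == q.2) -> A p != A q.

Definition dp_sudoku (t : nat) (cw : 'I_n -> pos) (A : arr) : Prop :=
  latin A /\
  forall p q : pos, p != q -> (A p, palette t cw p) != (A q, palette t cw q).

Definition relab_class (A : arr) : {set arr} :=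
  [set B : arr | [exists s : {perm 'I_n}, B == [ffun p => s (A p)]]].

Definition pact (f : pos -> pos) (A : arr) : arr := [ffun q => A (f q)].

Lemma pact_inj (f g : pos -> pos) : cancel g f -> injective (pact f).
Proof.
move=> gK A B /ffunP eqAB; apply/ffunP => q.
by have := eqAB (g q); rewrite !ffunE gK.
Qed.

Definition mkperm (f g : pos -> pos) (H : cancel g f) : {perm arr} :=
  perm (pact_inj H).

(* (r A)_{i,j} = A_{n-1-j, i} *)
Definition r_pos (p : pos) : pos := ((- 1 - p.2)%R, p.1).
Definition r_inv (p : pos) : pos := (p.2, (- 1 - p.1)%R).
Lemma r_invK : cancel r_inv r_pos.
Proof. by case=> i j; rewrite /r_pos /r_inv /=; congr (_, _); rewrite opprB addrC subrK. Qed.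

(* (s A)_{i,j} = A_{i, n-1-j} *)
Definition s_pos (p : pos) : pos := (p.1, (- 1 - p.2)%R).
Lemma s_posK : cancel s_pos s_pos.
Proof. by case=> i j; rewrite /s_pos /=; congr (_, _); rewrite opprB addrC subrK. Qed.

Definition t1_pos (p : pos) : pos := ((p.1 - 1)%R, p.2).
Definition t1_inv (p : pos) : pos := ((p.1 + 1)%R, p.2).
Lemma t1_invK : cancel t1_inv t1_pos.
Proof. by case=> i j; rewrite /t1_pos /t1_inv /= addrK. Qed.
Definition t2_pos (p : pos) : pos := (p.1, (p.2 - 1)%R).
Definition t2_inv (p : pos) : pos := (p.1, (p.2 + 1)%R).
Lemma t2_invK : cancel t2_inv t2_pos.
Proof. by case=> i j; rewrite /t2_pos /t2_inv /= addrK. Qed.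

Definition rmap : {perm arr} := mkperm r_invK.
Definition smap : {perm arr} := mkperm s_posK.
Definition tau1 : {perm arr} := mkperm t1_invK.
Definition tau2 : {perm arr} := mkperm t2_invK.

Local Open Scope group_scope.
(* NB: in MathComp, (p * q) x = q (p x); hence the paper's composition
   f g (apply g first) is written g * f below. *)

Definition gensI (t : nat) (x : pos) : {set {perm arr}} :=
  [set tau2 ^+ t.+1 * tau1 ^+ t.+1;
       tau2 ^+ (2 * t.+1);
       smap * tau2 ^+ (2 * val x.2 + 1);
       rmap ^+ 2 * tau2 ^+ (2 * val x.2 + 1) * tau1 ^+ (2 * val x.1 + 2)].

Definition gensII (a b : 'Z_n) (x : pos) : {set {perm arr}} :=
  [set tau2 ^+ val b * tau1 ^+ val a;
       rmap ^+ 2 * tau2 ^+ (2 * val x.2 + 1) * tau1 ^+ (2 * val x.1 + 2)].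

Definition class_orbit (gens : {set {perm arr}}) (A : arr) : {set {set arr}} :=
  [set relab_class ((g : {perm arr}) A) | g in <<gens>>%g].

End Defs.

From mathcomp Require Import all_boot all_order all_algebra all_fingroup.
From mathcomp Require Import cyclic ring zify.
Set Implicit Arguments. Unset Strict Implicit. Unset Printing Implicit Defensive.
Import GRing.Theory.

(* Every generator acts on arrays by precomposition with an affine map of
   Z_n^2: a translation, possibly followed by the column reflection (from s)
   or the point reflection (from r^2). Such maps commute with relabeling, so
   the group acts on relabeling classes and every orbit has size dividing its
   order.
   In Case I, with T = t+1 and n = 2T^2, the translations by (T,T) and (0,2T)
   commute and have orders dividing 2T and T, and the two reflections are
   commuting involutions normalizing the translation subgroup, so the order
   divides 2T * T * 2 * 2 = 4n. In Case II the translation by (a,b) has order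
   dividing n and the point reflection inverts it: a dihedral group of order
   dividing 2n. *)

Section GroupOrders.
Local Open Scope group_scope.
Variable gT : finGroupType.
Implicit Types a b c d g : gT.

Lemma card_gen_set2_dvdn a g na ng :
  a ^ g \in <[a]> -> a ^+ na = 1 -> g ^+ ng = 1 -> #|<<[set a; g]>>| %| na * ng.
Proof.
move=> nag ana gng.
have -> : <<[set a; g]>> = <[a]> <*> <[g]> by rewrite joing_idl joing_idr.
rewrite norm_joinEr ?norms_cycle //.
by apply: dvdn_trans (dvdn_cardMg _ _) _; rewrite dvdn_mul // -orderE order_dvdn ?ana ?gng.
Qed.

Lemma norm_gen_set2 a b g :
  a ^ g \in <<[set a; b]>> -> b ^ g \in <<[set a; b]>> -> g \in 'N(<<[set a; b]>>).
Proof.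
move=> agS bgS; rewrite inE -genJ gen_subG.
by apply/subsetP=> _ /imsetP[y /set2P[]-> ->].
Qed.

Lemma card_gen_set4_dvdn a b c d :
  c \in 'N(<<[set a; b]>>) -> d \in 'N(<<[set a; b]>>) ->
  #|<<[set a; b; c; d]>>| %| #|<<[set a; b]>>| * #|<<[set c; d]>>|.
Proof.
move=> nc nd.
have -> : [set a; b; c; d] = [set a; b] :|: [set c; d].
  by apply/setP=> z; rewrite !inE !orbA.
rewrite -joingE -joing_idl -joing_idr norm_joinEr ?dvdn_cardMg //.
by rewrite gen_subG; apply/subsetP=> z /set2P[]->.
Qed.

End GroupOrders.

Lemma eq_mod_char (R : pzRingType) (N : nat) (x y c : R) :
  (N%:R = 0 :> R -> x = y + c * N%:R -> x = y)%R.
Proof. by move=> charN ->; rewrite charN mulr0 addr0. Qed.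

(* Identities of 'Z_N that hold over Z up to adding N or -N. *)
Ltac ring_mod charN :=
  first [ ring
        | apply: (eq_mod_char (c := 1) charN); ring
        | apply: (eq_mod_char (c := -1) charN); ring ].

Section ArrayMaps.
Variable n : nat.
Local Notation pos := (pos n).
Local Notation arr := (arr n).
Local Open Scope ring_scope.

Definition is_pact (g : {perm arr}) (f : pos -> pos) : Prop := forall A, g A = pact f A.

Definition shift (v q : pos) : pos := (q.1 - v.1, q.2 - v.2).
Definition col_mirror (c : 'Z_n) (q : pos) : pos := (q.1, c - q.2).
Definition point_mirror (w q : pos) : pos := (w.1 - q.1, w.2 - q.2).

Lemma col_mirror_involutive c : involutive (col_mirror c).
Proof. by move=> [q1 q2]; rewrite /col_mirror /=; congr pair; ring. Qed.

Lemma point_mirror_involutive w : involutive (point_mirror w).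
Proof. by move=> [q1 q2]; rewrite /point_mirror /=; congr pair; ring. Qed.

Lemma is_pact1 : is_pact 1 id.
Proof. by move=> A; rewrite perm1; apply/ffunP=> q; rewrite ffunE. Qed.

Lemma is_pactM u v fu fv :
  is_pact u fu -> is_pact v fv -> is_pact (u * v) (fu \o fv).
Proof. by move=> hu hv A; rewrite permM hu hv; apply/ffunP=> q; rewrite !ffunE. Qed.

Lemma eq_is_pact g f f' : is_pact g f -> f =1 f' -> is_pact g f'.
Proof. by move=> hg eff' A; rewrite hg; apply/ffunP=> q; rewrite !ffunE eff'. Qed.

Lemma is_pact_eq u v fu fv : is_pact u fu -> is_pact v fv -> fu =1 fv -> u = v.
Proof. by move=> hu hv efu; apply/permP=> A; rewrite (eq_is_pact hu efu) hv. Qed.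

Lemma is_pact_involution g f : is_pact g f -> involutive f -> (g ^+ 2 = 1)%g.
Proof.
by move=> hg f_inv; rewrite expgS expg1; apply: is_pact_eq (is_pactM hg hg) is_pact1 f_inv.
Qed.

Lemma is_pact_conj_involution g a fg fa :
  is_pact g fg -> involutive fg -> is_pact a fa -> is_pact (a ^ g)%g (fg \o fa \o fg).
Proof.
move=> hg fg_inv ha; have gV : (g^-1 = g)%g.
  by apply/eqP; rewrite eq_invg_mul -expg2 (is_pact_involution hg fg_inv).
by rewrite conjgE gV; apply: is_pactM hg (is_pactM ha hg).
Qed.

Lemma is_pactX u v k :
  is_pact u (shift v) -> is_pact (u ^+ k) (shift (v.1 *+ k, v.2 *+ k)).
Proof.
move=> hu; elim: k => [|k IHk].
  rewrite expg0; apply: (eq_is_pact is_pact1) => q.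
  by rewrite /shift !subr0 -surjective_pairing.
rewrite expgSr; apply: (eq_is_pact (is_pactM IHk hu)) => q.
by rewrite /shift /= !mulrS !opprD !addrA.
Qed.

Lemma is_pact_tau1 : is_pact (tau1 n) (shift (1, 0)).
Proof. by move=> A; rewrite permE; apply/ffunP=> q; rewrite !ffunE /shift subr0. Qed.

Lemma is_pact_tau2 : is_pact (tau2 n) (shift (0, 1)).
Proof. by move=> A; rewrite permE; apply/ffunP=> q; rewrite !ffunE /shift subr0. Qed.

Lemma is_pact_tau i j : is_pact (tau2 n ^+ j * tau1 n ^+ i) (shift (i%:R, j%:R)).
Proof.
apply: (eq_is_pact (is_pactM (is_pactX j is_pact_tau2) (is_pactX i is_pact_tau1))) => q.
by rewrite /shift /= !mul0rn !subr0.
Qed.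

Lemma is_pact_s_tau2 j : is_pact (smap n * tau2 n ^+ j) (col_mirror (j%:R - 1)).
Proof.
have hs : is_pact (smap n) (@s_pos n) by move=> A; rewrite permE.
apply: (eq_is_pact (is_pactM hs (is_pactX j is_pact_tau2))) => q.
by rewrite /shift /s_pos /col_mirror /= mul0rn subr0; congr pair; ring.
Qed.

Lemma is_pact_r2_tau i j :
  is_pact (rmap n ^+ 2 * tau2 n ^+ j * tau1 n ^+ i) (point_mirror (i%:R - 1, j%:R - 1)).
Proof.
have hr : is_pact (rmap n) (@r_pos n) by move=> A; rewrite permE.
rewrite -mulgA expgS expg1.
apply: (eq_is_pact (is_pactM (is_pactM hr hr) (is_pact_tau i j))) => q.
by rewrite /shift /r_pos /point_mirror /=; congr pair; ring.
Qed.

Definition relabel (s : {perm 'I_n}) (A : arr) : arr := [ffun p => s (A p)].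

Definition relabel_commuting : {set {perm arr}} :=
  [set g : {perm arr} | [forall s, forall A, g (relabel s A) == relabel s (g A)]].

Lemma relabel_commutingP (g : {perm arr}) :
  reflect (forall s A, g (relabel s A) = relabel s (g A)) (g \in relabel_commuting).
Proof.
rewrite inE; apply: (iffP forallP) => [hg s A | hg s]; first exact/eqP/(forallP (hg s)).
by apply/forallP=> A; rewrite hg.
Qed.

Lemma relabel_commuting_group_set : group_set relabel_commuting.
Proof.
apply/group_setP; split; first by apply/relabel_commutingP=> s A; rewrite !perm1.
move=> g h /relabel_commutingP hg /relabel_commutingP hh.
by apply/relabel_commutingP=> s A; rewrite !permM hg hh.
Qed.

Canonical relabel_commuting_group := Group relabel_commuting_group_set.

Lemma is_pact_relabel_commuting g f : is_pact g f -> g \in relabel_commuting.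
Proof.
by move=> hg; apply/relabel_commutingP=> s A; rewrite !hg; apply/ffunP=> q; rewrite !ffunE.
Qed.

Lemma relab_classE A : relab_class A = [set relabel s A | s : {perm 'I_n}].
Proof.
by apply/setP=> B; rewrite inE; apply/existsP/imsetP=> [[s /eqP->] | [s _ ->]]; exists s.
Qed.

Lemma relab_class_commuting (g : {perm arr}) A :
  g \in relabel_commuting -> relab_class (g A) = g @: relab_class A.
Proof.
move=> /relabel_commutingP hg; rewrite !relab_classE -imset_comp.
by apply: eq_imset => s /=; rewrite hg.
Qed.

Lemma card_class_orbit_dvdn (gens : {set {perm arr}}) (A : arr) :
  gens \subset relabel_commuting -> (#|class_orbit gens A| %| #|<<gens>>%g|)%N.
Proof.
move=> gens_comm.
have sG : (<<gens>> \subset relabel_commuting_group)%g by rewrite gen_subG.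
suff -> : class_orbit gens A = orbit 'P^* <<gens>>%g (relab_class A) by apply: dvdn_orbit.
apply: eq_in_imset => g /(subsetP sG) g_comm /=.
by rewrite relab_class_commuting // setactE; apply: eq_imset => B; rewrite apermE.
Qed.

Section CaseI.
Variables (t : nat) (x : pos).
Hypothesis n_eq : n = (2 * t.+1 ^ 2)%N.

Local Notation aI := (tau2 n ^+ t.+1 * tau1 n ^+ t.+1)%g.
Local Notation bI := (tau2 n ^+ (2 * t.+1))%g.
Local Notation sI := (smap n * tau2 n ^+ (2 * val x.2 + 1))%g.
Local Notation rI :=
  (rmap n ^+ 2 * tau2 n ^+ (2 * val x.2 + 1) * tau1 n ^+ (2 * val x.1 + 2))%g.

Let charn : (2 * t.+1 ^ 2)%:R = 0 :> 'Z_n.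
Proof. by rewrite -n_eq pchar_Zp // n_eq; nia. Qed.

Let haI : is_pact aI (shift (t.+1%:R, t.+1%:R)).
Proof. exact: is_pact_tau. Qed.

Let hbI : is_pact bI (shift (0, (2 * t.+1)%:R)).
Proof.
by apply: (eq_is_pact (is_pactX (2 * t.+1) is_pact_tau2)) => q; rewrite /shift /= mul0rn.
Qed.

Let hsI : is_pact sI (col_mirror ((2 * val x.2 + 1)%:R - 1)).
Proof. exact: is_pact_s_tau2. Qed.

Let hrI : is_pact rI (point_mirror ((2 * val x.1 + 2)%:R - 1, (2 * val x.2 + 1)%:R - 1)).
Proof. exact: is_pact_r2_tau. Qed.

Let sI_inv : involutive (col_mirror ((2 * val x.2 + 1)%:R - 1)).
Proof. exact: col_mirror_involutive. Qed.

Let rI_inv : involutive (point_mirror ((2 * val x.1 + 2)%:R - 1, (2 * val x.2 + 1)%:R - 1)).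
Proof. exact: point_mirror_involutive. Qed.

Lemma gensI_relabel_commuting : gensI t x \subset relabel_commuting.
Proof.
rewrite !subUset !sub1set.
by rewrite (is_pact_relabel_commuting haI) (is_pact_relabel_commuting hbI)
  (is_pact_relabel_commuting hsI) (is_pact_relabel_commuting hrI).
Qed.

Let aI_order : (aI ^+ (2 * t.+1) = 1)%g.
Proof.
apply: (is_pact_eq (is_pactX _ haI) is_pact1) => -[q1 q2].
by rewrite /shift /=; congr pair; ring_mod charn.
Qed.

Let bI_order : (bI ^+ t.+1 = 1)%g.
Proof.
apply: (is_pact_eq (is_pactX _ hbI) is_pact1) => -[q1 q2].
by rewrite /shift /=; congr pair; ring_mod charn.
Qed.

Let aI_bI : (aI ^ bI = aI)%g.
Proof.
suff aIbI : commute aI bI by rewrite conjgE aIbI mulKg.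
apply: (is_pact_eq (is_pactM haI hbI) (is_pactM hbI haI)) => -[q1 q2].
by rewrite /shift /=; congr pair; ring.
Qed.

Let sI_rI : (sI ^ rI = sI)%g.
Proof.
apply: (is_pact_eq (is_pact_conj_involution hrI rI_inv hsI) hsI) => -[q1 q2].
by rewrite /col_mirror /point_mirror /=; congr pair; ring.
Qed.

Let sI_norm : sI \in 'N(<<[set aI; bI]>>)%g.
Proof.
have aI_in := mem_gen (set21 aI bI); have bI_in := mem_gen (set22 aI bI).
apply: norm_gen_set2.
  have -> : (aI ^ sI = aI * bI ^+ t)%g.
    apply: (is_pact_eq (is_pact_conj_involution hsI sI_inv haI)
                       (is_pactM haI (is_pactX t hbI))) => -[q1 q2].
    by rewrite /shift /col_mirror /=; congr pair; ring_mod charn.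
  by rewrite groupM // groupX.
have -> : (bI ^ sI = bI ^+ t)%g.
  apply: (is_pact_eq (is_pact_conj_involution hsI sI_inv hbI) (is_pactX t hbI)) => -[q1 q2].
  by rewrite /shift /col_mirror /=; congr pair; ring_mod charn.
by rewrite groupX.
Qed.

Let rI_norm : rI \in 'N(<<[set aI; bI]>>)%g.
Proof.
have aI_in := mem_gen (set21 aI bI); have bI_in := mem_gen (set22 aI bI).
apply: norm_gen_set2.
  have -> : (aI ^ rI = aI ^+ (2 * t + 1))%g.
    apply: (is_pact_eq (is_pact_conj_involution hrI rI_inv haI) (is_pactX _ haI)) => -[q1 q2].
    by rewrite /shift /point_mirror /=; congr pair; ring_mod charn.
  by rewrite groupX.
have -> : (bI ^ rI = bI ^+ t)%g.
  apply: (is_pact_eq (is_pact_conj_involution hrI rI_inv hbI) (is_pactX t hbI)) => -[q1 q2].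
  by rewrite /shift /point_mirror /=; congr pair; ring_mod charn.
by rewrite groupX.
Qed.

Lemma card_gensI_dvdn : (#|<<gensI t x>>%g| %| 4 * n)%N.
Proof.
apply: dvdn_trans (card_gen_set4_dvdn sI_norm rI_norm) _.
have -> : (4 * n = (2 * t.+1 * t.+1) * (2 * 2))%N by rewrite n_eq; ring.
apply: dvdn_mul; apply: card_gen_set2_dvdn.
- by rewrite aI_bI cycle_id.
- exact: aI_order.
- exact: bI_order.
- by rewrite sI_rI cycle_id.
- exact: is_pact_involution hsI sI_inv.
- exact: is_pact_involution hrI rI_inv.
Qed.

End CaseI.

Section CaseII.
Variables (a b : 'Z_n) (x : pos).
Hypothesis n_gt1 : (1 < n)%N.

Local Notation uII := (tau2 n ^+ val b * tau1 n ^+ val a)%g.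
Local Notation rII :=
  (rmap n ^+ 2 * tau2 n ^+ (2 * val x.2 + 1) * tau1 n ^+ (2 * val x.1 + 2))%g.

Let huII : is_pact uII (shift (a, b)).
Proof. by apply: (eq_is_pact (is_pact_tau (val a) (val b))) => q; rewrite !natr_Zp. Qed.

Let hrII : is_pact rII (point_mirror ((2 * val x.1 + 2)%:R - 1, (2 * val x.2 + 1)%:R - 1)).
Proof. exact: is_pact_r2_tau. Qed.

Let rII_inv : involutive (point_mirror ((2 * val x.1 + 2)%:R - 1, (2 * val x.2 + 1)%:R - 1)).
Proof. exact: point_mirror_involutive. Qed.

Lemma gensII_relabel_commuting : gensII a b x \subset relabel_commuting.
Proof.
rewrite !subUset !sub1set.
by rewrite (is_pact_relabel_commuting huII) (is_pact_relabel_commuting hrII).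
Qed.

Lemma card_gensII_dvdn : (#|<<gensII a b x>>%g| %| 2 * n)%N.
Proof.
have mulrn_n (z : 'Z_n) : z *+ n = 0 by rewrite -mulr_natr pchar_Zp // mulr0.
have uII_order : (uII ^+ n = 1)%g.
  apply: (is_pact_eq (is_pactX n huII) is_pact1) => -[q1 q2].
  by rewrite /shift /= !mulrn_n !subr0.
have uII_rII : (uII ^ rII = uII^-1)%g.
  apply/esym/eqP; rewrite eq_invg_mul; apply/eqP.
  apply: (is_pact_eq (is_pactM huII (is_pact_conj_involution hrII rII_inv huII)) is_pact1).
  by move=> -[q1 q2]; rewrite /shift /point_mirror /=; congr pair; ring.
rewrite mulnC; apply: card_gen_set2_dvdn uII_order _.
- by rewrite uII_rII groupV cycle_id.
- exact: is_pact_involution hrII rII_inv.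
Qed.

End CaseII.

End ArrayMaps.

Theorem mainTheorem5 (t n : nat) (C0 : {set pos n}) (x : pos n)
    (cw : 'I_n -> pos n) :
  1 <= t -> n = 2 * t.+1 ^ 2 ->
  linear_tEC_DPC t C0 ->
  (* C = x + C0 = {c_1, ..., c_n}, enumerated injectively by cw *)
  injective cw -> translate x C0 = [set cw i | i : 'I_n] ->
  (caseI t C0 ->
     forall A : arr n, dp_sudoku t cw A ->
       #|class_orbit (gensI t x) A| %| 4 * n) /\
  (forall a b : 'Z_n, C0 = gen1 (a, b) -> caseII t C0 ->
     forall A : arr n, dp_sudoku t cw A ->
       #|class_orbit (gensII a b x) A| %| 2 * n).
Proof.
move=> _ n_eq _ _ _; have n_gt1 : 1 < n by rewrite n_eq; nia.
split=> [_ A _ | a b _ _ A _].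
- apply: dvdn_trans (card_class_orbit_dvdn A (gensI_relabel_commuting t x)) _.
  exact: card_gensI_dvdn.
- apply: dvdn_trans (card_class_orbit_dvdn A (gensII_relabel_commuting a b x)) _.
  exact: card_gensII_dvdn.
Qed.
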